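(* Let $t \geq 4$ and $n \geq 1$ be integers, let $t' = [t/2]$, $x = \left[\frac{nt'-1}{t'-1}\right]$, and write $x-2 = tq + r$ with integers $q$ and $0 \leq r \leq t-1$. Let $R = R_{t-2,t}(K_{1,n})$. Then $R = x+1$ if and only if one of the following conditions holds: (a) $r = t-1 > 2q+4$ and $x$ is even; (b) $r = t-1 > 2q+4$ and $x$ and $t$ are odd; (c) $r = t-1$, $x$ is odd, and $t$ and $q+1$ are even; (d) $r < t-2$ and $t > 2r+4$ and $t$ is even; (e) $r < t-2$ and $t > 2q+2r+5$ and $t$ is odd.
   Context: $[a]$ denotes the integer part (floor) of a real number $a$. $K_{1,n}$ is the star with $n$ edges. For a graph $G$ and integers $1 \leq s < t$, $R_{s,t}(G)$ is the smallest positive integer $N$ such that every coloring of the edges of the complete graph $K_N$ with $t$ colors contains a (not necessarily induced) subgraph isomorphic to $G$ whose edges use at most $s$ distinct colors. *)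

From mathcomp Require Import all_boot all_order all_algebra.
Set Implicit Arguments. Unset Strict Implicit. Unset Printing Implicit Defensive.

(* An edge colouring of the complete graph K_N (vertex set 'I_N) with t colours
   (colour set 'I_t): a symmetric function on pairs of vertices; values on the
   diagonal are irrelevant. *)
Definition coloring (N t : nat) (c : 'I_N -> 'I_N -> 'I_t) : Prop :=
  forall u v, c u v = c v u.

(* A graph G = (V, e): e is a (symmetric, irreflexive) relation on a finite type V. *)
Definition has_few_colored_copy (V : finType) (e : rel V) (N t s : nat)
  (c : 'I_N -> 'I_N -> 'I_t) : Prop :=
  exists f : V -> 'I_N, injective f /\
    #|[set c (f u) (f v) | u in V, v in V & e u v]| <= s.

Definition ramsey_prop (V : finType) (e : rel V) (s t N : nat) : Prop :=
  forall c : 'I_N -> 'I_N -> 'I_t, coloring c -> has_few_colored_copy e s c.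

Definition is_Rst (V : finType) (e : rel V) (s t R : nat) : Prop :=
  0 < R /\ ramsey_prop e s t R /\
  forall N, 0 < N -> N < R -> ~ ramsey_prop e s t N.

Definition star_rel (n : nat) : rel 'I_n.+1 :=
  fun u v => ((val u == 0) && (val v != 0)) || ((val v == 0) && (val u != 0)).

From mathcomp Require Import all_boot all_order all_algebra.
From mathcomp Require Import zify.
From Stdlib Require Import Classical.
Import Order.TTheory GRing.Theory Num.Theory.

Set Implicit Arguments. Unset Strict Implicit. Unset Printing Implicit Defensive.

(* A t-colouring of K_N has no copy of K_(1,n) with at most t - 2 colours iff at
   every vertex any two colour classes together hold at least N - n edges.  As
   the t colour degrees at a vertex sum to N - 1, this forces
   (N - n) + (t - 2) * ceil((N - n) / 2) <= N - 1.  With x = n + a, the bound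
   fails for N = x + 1, and for N = x it gives a <= 2 q1, where
   x - 1 = t q1 + r1.  If moreover r1 = 0 and x, q1 are odd, the bound is tight
   and every colour class is a q1-regular graph on an odd number of vertices,
   contradicting the handshake lemma.  In all remaining cases colourings of K_x
   by [u + v] or by the circular distance of [u] and [v], read modulo t, give
   every vertex at least q1 edges of each colour. *)

Section ColorDegrees.
Variables (N t : nat) (c : 'I_N -> 'I_N -> 'I_t).

Definition color_nbhd (v : 'I_N) (S : {set 'I_t}) := [set u | (u != v) && (c v u \in S)].
Definition color_deg v S := #|color_nbhd v S|.
Definition deg v k := color_deg v [set k].

Lemma color_deg_subset v (S S' : {set 'I_t}) :
  S \subset S' -> color_deg v S <= color_deg v S'.
Proof.
move=> sSS'; apply/subset_leq_card/subsetP=> u.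
by rewrite !inE => /andP[-> /(subsetP sSS') ->].
Qed.

Lemma color_degU v (S S' : {set 'I_t}) : [disjoint S & S'] ->
  color_deg v (S :|: S') = color_deg v S + color_deg v S'.
Proof.
move=> dSS'; rewrite /color_deg -cardsUI.
have -> : color_nbhd v (S :|: S') = color_nbhd v S :|: color_nbhd v S'.
  by apply/setP=> u; rewrite !inE; case: (u != v).
suff -> : color_nbhd v S :&: color_nbhd v S' = set0 by rewrite cards0 addn0.
apply/setP=> u; rewrite !inE; case: (u != v) => //=.
by apply/negbTE/negP=> /andP[/(disjointFr dSS') ->].
Qed.

Lemma color_degT v : color_deg v setT = N.-1.
Proof.
rewrite /color_deg.
have -> : color_nbhd v setT = [set~ v] by apply/setP=> u; rewrite !inE andbT.
by rewrite cardsC1 card_ord.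
Qed.

Lemma color_degC v (S : {set 'I_t}) : color_deg v S + color_deg v (~: S) = N.-1.
Proof. by rewrite -color_degU -?subsets_disjoint ?setUCr ?color_degT. Qed.

Lemma color_deg_pair v i j : i != j ->
  color_deg v (~: [set i; j]) + deg v i + deg v j = N.-1.
Proof.
move=> ij; rewrite -addnA /deg -color_degU ?disjoints1 ?inE //.
by rewrite addnC color_degC.
Qed.

Lemma sum_deg v : \sum_k deg v k = N.-1.
Proof.
rewrite -(color_degT v) /deg /color_deg.
transitivity (\sum_(k : 'I_t) \sum_(u : 'I_N) ((u != v) && (c v u == k) : nat)).
  apply: eq_bigr=> k _; rewrite -sum1dep_card big_mkcond /=.
  by apply: eq_bigr=> u _; rewrite !inE; case: ifP.
rewrite exchange_big /= -sum1dep_card [in RHS]big_mkcond /=.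
apply: eq_bigr=> u _; rewrite !inE andbT.
case: (u != v) => /=; last by rewrite big1.
by rewrite (bigD1 (c v u)) //= eqxx big1 // => k /negbTE; rewrite eq_sym => ->.
Qed.

Lemma handshake k : coloring c -> ~~ odd (\sum_v deg v k).
Proof.
move=> c_sym.
have degE v : deg v k = \sum_u ((u != v) && (c v u == k) : nat).
  rewrite /deg /color_deg -sum1dep_card big_mkcond /=.
  by apply: eq_bigr=> u _; rewrite !inE; case: ifP.
have splitE v u : ((u != v) && (c v u == k) : nat) =
     ((u < v) && (c v u == k) : nat) + ((v < u) && (c v u == k) : nat).
  case: (ltngtP u v) => [uv|vu|/val_inj ->] /=; last by rewrite eqxx.
  - by case: eqP => [eq_uv|_]; [rewrite eq_uv ltnn in uv | rewrite addn0].
  - by case: eqP => [eq_uv|_]; [rewrite eq_uv ltnn in vu | rewrite add0n].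
under eq_bigr => v _ do rewrite degE.
under eq_bigr => v _ do under eq_bigr => u _ do rewrite splitE.
under eq_bigr => v _ do rewrite big_split /=.
rewrite big_split /= [X in _ + X]exchange_big /=.
under [X in _ + X]eq_bigr => u _ do under eq_bigr => v _ do rewrite c_sym.
by rewrite addnn odd_double.
Qed.

End ColorDegrees.

Section RamseyProperty.
Variables (V : finType) (e : rel V) (s t : nat).

Lemma ramsey_prop_widen N M : N <= M -> ramsey_prop e s t N -> ramsey_prop e s t M.
Proof.
move=> NM ramN c c_sym.
have [|f [f_inj few]] := ramN (fun u v => c (widen_ord NM u) (widen_ord NM v)).
  by move=> u v; apply: c_sym.
exists (widen_ord NM \o f); split => //.
by move=> i j /(congr1 val) /= /val_inj /f_inj.
Qed.

Lemma not_ramsey_propP N : ~ ramsey_prop e s t N <->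
  exists c : 'I_N -> 'I_N -> 'I_t, coloring c /\ ~ has_few_colored_copy e s c.
Proof.
split=> [notR | [c [c_sym no_copy]] ramN]; last exact/no_copy/ramN.
apply: NNPP => no_c; apply: notR => c c_sym.
by apply: NNPP => no_copy; apply: no_c; exists c.
Qed.

Lemma is_Rst_succ x : 0 < x ->
  is_Rst e s t x.+1 <-> ramsey_prop e s t x.+1 /\ ~ ramsey_prop e s t x.
Proof.
move=> x_gt0; split=> [[_ [ramSx minR]] | [ramSx notR]].
  by split=> //; apply: minR.
split=> //; split=> // N N_gt0 NSx ramN.
by apply/notR/(ramsey_prop_widen _ ramN); rewrite -ltnS.
Qed.

End RamseyProperty.

Section StarCopies.
Variables (N t n : nat) (c : 'I_N -> 'I_N -> 'I_t).
Hypothesis c_sym : coloring c.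

Lemma few_colored_starP s : has_few_colored_copy (@star_rel n) s c <->
  exists v (S : {set 'I_t}), #|S| <= s /\ n <= color_deg c v S.
Proof.
split=> [[f [f_inj few]] | [v [S [card_S n_le]]]].
  set S := [set c (f u) (f v) | u in _, v in _ & star_rel u v] in few.
  exists (f ord0), S; split => //.
  have card_leaves : #|[set~ (ord0 : 'I_n.+1)]| = n by rewrite cardsC1 card_ord.
  rewrite -[X in X <= _]card_leaves.
  rewrite -(card_in_imset (f := f)); last by move=> i j _ _; apply: f_inj.
  apply/subset_leq_card/subsetP=> u /imsetP[i]; rewrite !inE => i0 ->.
  rewrite (inj_eq f_inj) i0 /=; apply/imset2P; exists ord0 i => //.
  by rewrite !inE /star_rel /=; move: i0; rewrite -[i == ord0]/(val i == 0) => ->.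
set s' := enum (color_nbhd c v S).
have size_s' : size s' = color_deg c v S by rewrite -cardE.
have s'_nbhd i : i < size s' -> nth v s' i \in color_nbhd c v S.
  by move=> ?; rewrite -mem_enum mem_nth.
pose f (i : 'I_n.+1) := if i == 0 :> nat then v else nth v s' i.-1.
have f_nbhd (i : 'I_n.+1) : i != 0 :> nat -> f i \in color_nbhd c v S.
  move=> i0; rewrite /f (negbTE i0); apply: s'_nbhd; rewrite size_s'.
  by move/eqP: i0; have := ltn_ord i; lia.
exists f; split.
  move=> i j; rewrite /f.
  case: (eqVneq (i : nat) 0) => i0; case: (eqVneq (j : nat) 0) => j0.
  - by move=> _; apply: ord_inj; rewrite i0 j0.
  - by move=> fij; have := f_nbhd j j0; rewrite /f (negbTE j0) -fij inE eqxx.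
  - by move=> fij; have := f_nbhd i i0; rewrite /f (negbTE i0) fij inE eqxx.
  - move=> /eqP; rewrite nth_uniq ?enum_uniq // ?size_s'; last 2 first.
    + by move/eqP: i0; have := ltn_ord i; lia.
    + by move/eqP: j0; have := ltn_ord j; lia.
    by move/eqP: i0; move/eqP: j0 => j0 i0 /eqP ij; apply: ord_inj; lia.
apply/(leq_trans _ card_S)/subset_leq_card/subsetP=> k.
case/imset2P=> u w _; rewrite !inE /star_rel => /orP[] /andP[/eqP u0 w0] ->.
  by have := f_nbhd w w0; rewrite inE /f u0 eqxx => /andP[].
by have := f_nbhd u w0; rewrite inE /f u0 eqxx c_sym => /andP[].
Qed.

Lemma few_colored_star_freeP : 2 <= t ->
  ~ has_few_colored_copy (@star_rel n) (t - 2) c <->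
  forall v i j, i != j -> N - n <= deg c v i + deg c v j.
Proof.
move=> t_ge2; split=> [no_copy v i j ij | pair_lb].
  have := color_deg_pair c v ij; have := ltn_ord v.
  case: (leqP n (color_deg c v (~: [set i; j]))) => [n_le|]; last by lia.
  case: no_copy; apply/few_colored_starP; exists v, (~: [set i; j]); split=> //.
  by have := cardsC [set i; j]; rewrite cards2 ij card_ord; lia.
case/few_colored_starP=> v [S [card_S n_le]].
have : 1 < #|~: S| by have := cardsC S; rewrite card_ord; lia.
case/card_gt1P=> i [j [iS jS ij]].
have sub : S \subset ~: [set i; j].
  by apply/subsetP=> k kS; rewrite !inE; apply/negP=> /orP[] /eqP ek;
    move: iS jS; rewrite -ek !inE kS.
have := color_deg_subset c v sub; have := color_deg_pair c v ij.
have := pair_lb v i j ij; have := ltn_ord v; lia.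
Qed.

End StarCopies.

Lemma bigD1_leq_sum t (d : 'I_t -> nat) b h : (forall k, k != b -> h <= d k) ->
  d b + t.-1 * h <= \sum_k d k.
Proof.
move=> d_ge; rewrite (bigD1 b) //= leq_add2l.
apply: leq_trans (_ : \sum_(k | k != b) h <= _); last exact: leq_sum.
by rewrite sum_nat_const cardC1 card_ord mulnC.
Qed.

Lemma pairwise_lb_sum t (d : 'I_t -> nat) s : 2 <= t ->
  (forall i j, i != j -> s <= d i + d j) -> s + (t - 2) * s.+1./2 <= \sum_k d k.
Proof.
move=> t_ge2 pair_lb; have tE : t.-1 = (t - 2).+1 by lia.
case: (pickP (fun b => 2 * d b < s)) => [b small_b | no_small].
  have d_ge k : k != b -> s - d b <= d k by move=> kb; have := pair_lb k b kb; lia.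
  apply: leq_trans (bigD1_leq_sum d_ge).
  have : (t - 2) * s.+1./2 <= (t - 2) * (s - d b) by rewrite leq_mul2l; apply/orP; lia.
  by rewrite tE mulSn; lia.
have d_ge k : s.+1./2 <= d k by have := no_small k; lia.
have := bigD1_leq_sum (b := Ordinal (ltnW t_ge2)) (fun k _ => d_ge k).
by have := d_ge (Ordinal (ltnW t_ge2)); rewrite tE mulSn; lia.
Qed.

Lemma pairwise_lb_const t (d : 'I_t -> nat) q : 3 <= t -> \sum_k d k = t * q ->
  (forall i j, i != j -> 2 * q <= d i + d j) -> forall k, d k = q.
Proof.
move=> t_ge3 sum_d pair_lb.
have tE : t = t.-2.+2 by lia.
have d_ge b : q <= d b.
  rewrite leqNgt; apply/negP=> small_b.
  have d_ge k : k != b -> 2 * q - d b <= d k.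
    by move=> kb; have := pair_lb k b kb; lia.
  have := bigD1_leq_sum d_ge; rewrite sum_d.
  have e1 : t.-1 * (2 * q - d b) = t.-1 * q + t.-1 * (q - d b).
    by rewrite -mulnDr; congr (_ * _); lia.
  have e2 : 2 * (q - d b) <= t.-1 * (q - d b) by rewrite leq_mul2r; apply/orP; lia.
  have e3 : t * q = t.-1 * q + q by rewrite tE mulSn addnC.
  lia.
move=> k; apply/eqP; rewrite eqn_leq d_ge andbT.
have := bigD1_leq_sum (fun j (_ : j != k) => d_ge j); rewrite sum_d.
by rewrite [in X in X -> _]tE /= mulSn; lia.
Qed.

Definition min_deg_coloring N t q := exists c : 'I_N -> 'I_N -> 'I_t,
  coloring c /\ forall v k, q <= deg c v k.

Section ModColorings.
Variables (t : nat) (t_gt0 : 0 < t).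

Definition mod_coloring N (f : nat -> nat -> nat) : 'I_N -> 'I_N -> 'I_t :=
  fun u v => Ordinal (ltn_pmod (f u v) t_gt0).

Lemma mod_coloring_sym N f : (forall u v, f u v = f v u) -> coloring (@mod_coloring N f).
Proof. by move=> f_sym u v; rewrite /mod_coloring f_sym. Qed.

(* Colour [k] is seen through the distinct neighbours [nbr (j * t + k)], [j < q]. *)
Lemma mod_coloring_deg_lb N q (f : nat -> nat -> nat) (v : 'I_N) L (nbr : nat -> nat) :
  t * q <= L ->
  (forall i, i < L -> [/\ nbr i < N, nbr i != v & f v (nbr i) %% t = i %% t]) ->
  {in gtn L &, injective nbr} ->
  forall k, q <= deg (@mod_coloring N f) v k.
Proof.
move=> tq_le nbr_ok nbr_inj k.
have jk_lt (j : 'I_q) : j * t + k < L.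
  have : j.+1 * t <= q * t by rewrite leq_mul2r ltn_ord orbT.
  by rewrite mulSn; have := ltn_ord k; lia.
pose g (j : 'I_q) := insubd v (nbr (j * t + k)).
have gE j : g j = nbr (j * t + k) :> nat.
  by rewrite /g insubdK //; case: (nbr_ok _ (jk_lt j)).
rewrite -[q]card_ord -(card_in_imset (f := g)); last first.
  move=> j1 j2 _ _ /(congr1 (@nat_of_ord _)); rewrite !gE => /nbr_inj.
  rewrite !inE => /(_ (jk_lt j1) (jk_lt j2)) /eqP.
  by rewrite eqn_add2r eqn_mul2r eqn0Ngt t_gt0 => /eqP /val_inj.
apply/subset_leq_card/subsetP=> _ /imsetP[j _ ->].
case: (nbr_ok _ (jk_lt j)) => _ nbr_v f_nbr.
rewrite !inE; apply/andP; split.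
  by apply: contra nbr_v => /eqP/(congr1 (@nat_of_ord _)); rewrite /= gE => ->.
by apply/eqP/val_inj; rewrite /= gE f_nbr modnMDl modn_small.
Qed.

Definition addmod x a b := if a + b < x then a + b else a + b - x.

(* The one-factorisation of K_(p+1), p odd: vertices [u, v < p] get [u + v]
   modulo [p], and [p] gets [2u] modulo [p] against [u]; every vertex sees
   every residue modulo [p] exactly once. *)
Definition sum_color p u v :=
  if u == p then addmod p v v else if v == p then addmod p u u else addmod p u v.

Definition sum_color_nbr p v i :=
  if v == p then (if odd i then (i + p) %/ 2 else i %/ 2)
  else if i == addmod p v v then p
  else if v <= i then i - v else i + p - v.

Lemma sum_color_sym p u v : sum_color p u v = sum_color p v u.
Proof.
rewrite /sum_color /addmod.
case: (eqVneq u p) => up; case: (eqVneq v p) => vp //; first by rewrite up vp.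
by rewrite addnC.
Qed.

Lemma sum_color_nbrP p v i : odd p -> v <= p -> i < p ->
  [/\ sum_color_nbr p v i <= p, sum_color_nbr p v i != v
    & sum_color p v (sum_color_nbr p v i) = i].
Proof.
move=> p_odd vp ip; have p_mod2 : p %% 2 = 1 by rewrite modn2 p_odd.
rewrite /sum_color_nbr /sum_color /addmod.
case: (eqVneq v p) => [vE | v_neq_p].
  subst v; have i_mod2 : odd i = (i %% 2 == 1) by rewrite modn2; case: (odd i).
  rewrite i_mod2; case: ifP => i_odd.
    by split; [lia | apply/eqP; lia | case: ifP => ?; lia].
  by split; [lia | apply/eqP; lia | case: ifP => ?; lia].
case: (eqVneq i (if v + v < p then v + v else v + v - p)) => [-> | i_neq].
  by split=> //; rewrite ?eqxx // eq_sym.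
move: i_neq; case: (leqP v i) => vi i_neq.
  rewrite (_ : (i - v == p) = false); last by apply/eqP; lia.
  split; [lia | apply/eqP; move: i_neq; case: ifP => ? ?; lia |].
  by move: i_neq; case: ifP => ? ?; case: ifP => ?; lia.
rewrite (_ : (i + p - v == p) = false); last by apply/eqP; lia.
split; [lia | apply/eqP; move: i_neq; case: ifP => ? ?; lia |].
by move: i_neq; case: ifP => ? ?; case: ifP => ?; lia.
Qed.

Lemma sum_color_nbr_inj p v : odd p -> v <= p -> {in gtn p &, injective (sum_color_nbr p v)}.
Proof.
move=> p_odd vp i j; rewrite !inE => ip jp.
have p_mod2 : p %% 2 = 1 by rewrite modn2 p_odd.
have mod2E m : odd m = (m %% 2 == 1) by rewrite modn2; case: (odd m).
rewrite /sum_color_nbr /addmod !mod2E.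
case: (eqVneq v p) => [vE|v_neq_p]; first by case: ifP => ?; case: ifP => ?; lia.
case: (ltnP (v + v) p) => ?; case: eqP => ?; case: eqP => ?;
  case: (leqP v i) => ?; case: (leqP v j) => ?; lia.
Qed.

Lemma min_deg_coloring_sum p q : odd p -> t * q <= p -> min_deg_coloring p.+1 t q.
Proof.
move=> p_odd tq_le; exists (@mod_coloring p.+1 (sum_color p)).
split=> [|v]; first exact/mod_coloring_sym/sum_color_sym.
have vp : v <= p by rewrite -ltnS.
apply: (mod_coloring_deg_lb tq_le _ (sum_color_nbr_inj p_odd vp)) => i ip.
by case: (sum_color_nbrP p_odd vp ip) => ? ? ->.
Qed.

Definition apex_color p u v :=
  if u == p.+1 then v else if v == p.+1 then u else sum_color p u v.

Lemma apex_color_sym p u v : apex_color p u v = apex_color p v u.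
Proof.
rewrite /apex_color.
case: (eqVneq u p.+1) => up; case: (eqVneq v p.+1) => vp //; first by rewrite up vp.
exact: sum_color_sym.
Qed.

Lemma min_deg_coloring_apex p q : odd p -> t * q <= p -> min_deg_coloring p.+2 t q.
Proof.
move=> p_odd tq_le; exists (@mod_coloring p.+2 (apex_color p)).
split=> [|v]; first exact/mod_coloring_sym/apex_color_sym.
case: (eqVneq (v : nat) p.+1) => [v_apex | v_neq].
  apply: (@mod_coloring_deg_lb _ _ _ _ p.+1 id); first by lia.
    by move=> i ip; rewrite /apex_color v_apex eqxx; split=> //; apply/eqP; lia.
  by move=> i j _ _.
have vp : v <= p by have := ltn_ord v; lia.
apply: (mod_coloring_deg_lb tq_le _ (sum_color_nbr_inj p_odd vp)) => i ip.
case: (sum_color_nbrP p_odd vp ip) => ? ? f_nbr; split=> //; first by lia.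
rewrite /apex_color (negbTE v_neq) ifF ?f_nbr //; apply/eqP; lia.
Qed.

(* On the cycle Z_x, x = 2m + 1, the edge [u v] gets its circular distance
   minus one; every vertex sees each distance [1 .. m] exactly twice. *)
Definition circ_dist x u v :=
  let d := if v <= u then u - v else u + x - v in minn d (x - d).

Definition circ_color x u v := (circ_dist x u v).-1.

Definition circ_nbr x m v i :=
  if i < m then addmod x v i.+1
  else let d := i - m + 1 in if d <= v then v - d else v + x - d.

Lemma circ_color_sym x u v : u < x -> v < x -> circ_color x u v = circ_color x v u.
Proof.
move=> ux vx; rewrite /circ_color /circ_dist.
by case: ifP => ?; case: ifP => ?; congr (_.-1); lia.
Qed.

Lemma circ_nbrP m v i : v < m.*2.+1 -> i < m.*2 ->
  [/\ circ_nbr m.*2.+1 m v i < m.*2.+1, circ_nbr m.*2.+1 m v i != v &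
      circ_color m.*2.+1 v (circ_nbr m.*2.+1 m v i) = if i < m then i else i - m].
Proof.
move=> vx ix; rewrite /circ_nbr /circ_color /circ_dist /addmod.
case: (ltnP i m) => im /=.
  by case: (ltnP (v + i.+1) m.*2.+1) => ?; (split; [lia | apply/eqP; lia | case: ifP => ?; lia]).
by case: (leqP (i - m + 1) v) => ?; (split; [lia | apply/eqP; lia | case: ifP => ?; lia]).
Qed.

Lemma circ_nbr_inj m v : v < m.*2.+1 -> {in gtn m.*2 &, injective (circ_nbr m.*2.+1 m v)}.
Proof.
move=> vx i j; rewrite !inE /circ_nbr /addmod => ix jx.
by case: (ltnP i m) => ?; case: (ltnP j m) => ? /=; case: ifP => ?; case: ifP => ?; lia.
Qed.

Lemma min_deg_coloring_circ w : min_deg_coloring (t * w).*2.+1 t w.*2.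
Proof.
set m := t * w; set x := m.*2.+1.
pose f u v := if (u < x) && (v < x) then circ_color x u v else 0.
exists (@mod_coloring x f); split=> [|v].
  apply: mod_coloring_sym => u v; rewrite /f andbC.
  by case: ifP => // /andP[? ?]; apply: circ_color_sym.
have vx : v < x := ltn_ord v.
apply: (mod_coloring_deg_lb _ _ (circ_nbr_inj vx)); first by rewrite /m; lia.
move=> i ix; case: (circ_nbrP vx ix) => nbr_x ? f_nbr; split=> //.
rewrite /f vx nbr_x /= f_nbr; case: ifP => // im.
by rewrite [in RHS](_ : i = w * t + (i - m)) ?modnMDl //; rewrite /m; lia.
Qed.

End ModColorings.

Section StarRamsey.
Variables (t n : nat).
Hypothesis t_ge2 : 2 <= t.

Lemma star_free_deg_sum N (c : 'I_N -> 'I_N -> 'I_t) : 0 < N -> coloring c ->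
  ~ has_few_colored_copy (@star_rel n) (t - 2) c ->
  (N - n) + (t - 2) * (N - n).+1./2 <= N.-1.
Proof.
move=> N_gt0 c_sym /(few_colored_star_freeP n c_sym t_ge2) pair_lb.
by rewrite -(sum_deg c (Ordinal N_gt0)); apply: pairwise_lb_sum => // i j; apply: pair_lb.
Qed.

Lemma star_ramsey_of_deg_sum N : N.-1 < (N - n) + (t - 2) * (N - n).+1./2 ->
  ramsey_prop (@star_rel n) (t - 2) t N.
Proof.
move=> deg_sum c c_sym; apply: NNPP => star_free.
have N_gt0 : 0 < N by case: posnP deg_sum => [->|//]; rewrite sub0n muln0.
by have := star_free_deg_sum N_gt0 c_sym star_free; rewrite leqNgt deg_sum.
Qed.
(* A star-free colouring meeting the degree bound with equality is regular in
   every colour, so the handshake lemma applies to each colour class. *)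
Lemma star_free_parity N (c : 'I_N -> 'I_N -> 'I_t) q : 3 <= t -> coloring c ->
  ~ has_few_colored_copy (@star_rel n) (t - 2) c ->
  N.-1 = t * q -> 2 * q <= N - n -> ~~ (odd N && odd q).
Proof.
move=> t_ge3 c_sym /(few_colored_star_freeP n c_sym (ltnW t_ge3)) pair_lb sum_tq nq.
have deg_q v k : deg c v k = q.
  apply: pairwise_lb_const k => //; first by rewrite sum_deg.
  by move=> i j ij; apply: leq_trans nq (pair_lb v i j ij).
have := handshake (Ordinal (ltnW (ltnW t_ge3))) c_sym.
by under eq_bigr => v _ do rewrite deg_q; rewrite sum_nat_const card_ord oddM.
Qed.

Lemma not_star_ramsey_of_min_deg N q : min_deg_coloring N t q -> N <= n + 2 * q ->
  ~ ramsey_prop (@star_rel n) (t - 2) t N.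
Proof.
move=> [c [c_sym deg_ge]] N_le; apply/not_ramsey_propP; exists c; split=> //.
apply/(few_colored_star_freeP n c_sym t_ge2) => v i j _.
by have := deg_ge v i; have := deg_ge v j; lia.
Qed.

End StarRamsey.

Lemma odd_mod2 m : odd m = (m %% 2 == 1).
Proof. by rewrite modn2; case: (odd m). Qed.

(* In the theorem, a = (n - 1) %/ (t' - 1) and b = (n - 1) %% (t' - 1). *)
Section StarRamseyNumber.
Variables (t t' a b x : nat).
Hypotheses (t_half : t = t'.*2 + odd t) (t'_ge2 : 2 <= t')
  (x_div : x.-1 = a * t' + b) (b_lt : b < t'.-1).

Let t_ge3 : 3 <= t. Proof. lia. Qed.
Let t_gt0 : 0 < t. Proof. exact: ltnW (ltnW t_ge3). Qed.

Lemma deg_sum_succ_gt : x < a.+1 + (t - 2) * a.+2./2.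
Proof.
have : a.+1 <= 2 * a.+2./2 by rewrite -[a.+2 in X in _ <= X]odd_double_half; lia.
move: (a.+2./2) => h h_ge.
have : (t' - 1) * (2 * h) <= (t - 2) * h.
  by rewrite mulnA leq_mul2r; apply/orP; right; lia.
have : (t' - 1) * a.+1 <= (t' - 1) * (2 * h) by rewrite leq_mul2l h_ge orbT.
have : a.+1 * t' = a * t' + t' by rewrite mulSn addnC.
have : (t' - 1) * a.+1 + a.+1 = a.+1 * t' by rewrite mulnC -mulnSr; congr (_ * _); lia.
lia.
Qed.

Variables q1 r1 : nat.
Hypotheses (x_mod : x.-1 = t * q1 + r1) (r1_lt : r1 < t).

Let x_mod' : x.-1 = 2 * (t' * q1) + odd t * q1 + r1.
Proof. by rewrite x_mod {1}t_half mulnDl -mul2n -mulnA. Qed.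

Lemma le_double_q_iff : a <= 2 * q1 <-> odd t * q1 + r1 < t'.-1.
Proof.
have e : a * t' + b = 2 * (t' * q1) + odd t * q1 + r1 by rewrite -x_div x_mod'.
case: (ltngtP a (2 * q1)) => [a_lt | a_gt | a_eq].
- have : a.+1 * t' <= 2 * q1 * t' by rewrite leq_mul2r a_lt orbT.
  lia.
- have : (2 * q1).+1 * t' <= a * t' by rewrite leq_mul2r a_gt orbT.
  lia.
- by move: e; rewrite a_eq; lia.
Qed.

Lemma le_double_q_of_deg_sum : a + (t - 2) * a.+1./2 <= x.-1 -> a <= 2 * q1.
Proof.
move=> deg_sum; rewrite leqNgt; apply/negP=> a_gt.
have h_ge : q1.+1 <= a.+1./2 by rewrite -[a.+1]odd_double_half /=; lia.
move: (t - 2) (a.+1./2) (subnK (ltnW t_ge3)) h_ge deg_sum => m h tE h_ge deg_sum.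
have mh_ge : m * q1.+1 <= m * h by rewrite leq_mul2l h_ge orbT.
have tq1E : m * q1.+1 + 2 * q1.+1 = t * q1.+1 by rewrite -tE mulnDl.
have a_eq : a = (2 * q1).+1 by lia.
by have := x_mod'; rewrite x_div a_eq; lia.
Qed.

Lemma double_q_le_of_mod_eq0 : r1 = 0 -> 2 * q1 <= a.
Proof.
move=> r1_0; rewrite leqNgt; apply/negP=> a_lt.
have : a.+1 * t' <= 2 * q1 * t' by rewrite leq_mul2r a_lt orbT.
by have := x_mod'; lia.
Qed.

Lemma condition_intE (q r : int) : 0 < x ->
  (x%:Z - 2 = t%:Z * q + r)%R -> (0 <= r)%R -> (r <= t%:Z - 1)%R ->
  (((r = t%:Z - 1 /\ 2 * q + 4 < r)%R /\ ~~ odd x) \/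
   ((r = t%:Z - 1 /\ 2 * q + 4 < r)%R /\ odd x /\ odd t) \/
   ((r = t%:Z - 1)%R /\ odd x /\ ~~ odd t /\ (q + 1)%R \in dvdz 2) \/
   ((r < t%:Z - 2 /\ 2 * r + 4 < t%:Z)%R /\ ~~ odd t) \/
   ((r < t%:Z - 2 /\ 2 * q + 2 * r + 5 < t%:Z)%R /\ odd t)) <->
  a <= 2 * q1 /\ ~ (odd x /\ r1 = 0 /\ odd q1).
Proof.
move=> x_gt0 qrE r_ge0 r_le; rewrite le_double_q_iff.
have [[[-> ->] r1_0] | [[-> ->] r1_gt0]] : (r = t%:Z - 1 /\ q = q1%:Z - 1)%R /\ r1 = 0 \/
    (r = r1%:Z - 1 /\ q = q1%:Z)%R /\ 0 < r1.
  have diffE : (t%:Z * (q1%:Z - q) = r + 1 - r1%:Z)%R by lia.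
  have t_ge0 : (0 <= t%:Z)%R by lia.
  case: (lerP 2 (q1%:Z - q)%R) => [d_ge2 | d_lt2].
    by have := ler_wpM2l t_ge0 d_ge2; lia.
  case: (lerP (q1%:Z - q)%R (-1)) => [d_le | d_gt].
    by have := ler_wpM2l t_ge0 d_le; lia.
  have [dE|dE] : (q1%:Z - q = 0)%R \/ (q1%:Z - q = 1)%R by lia.
    by rewrite dE in diffE; right; lia.
  by rewrite dE in diffE; left; lia.
- rewrite GRing.subrK dvdzE /= -dvdn2 !odd_mod2 r1_0.
  have := x_mod'; have := t_half; case: (odd t); rewrite ?odd_mod2 /=; intuition lia.
- have := x_mod'; have := t_half; case: (odd t); rewrite !odd_mod2 /=; intuition lia.
Qed.

Variable n : nat.
Hypotheses (n_gt0 : 0 < n) (x_na : x = n + a).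

Lemma star_ramsey_succ : ramsey_prop (@star_rel n) (t - 2) t x.+1.
Proof.
apply: (star_ramsey_of_deg_sum (ltnW t_ge3)).
have -> : x.+1 - n = a.+1 by rewrite x_na -addnS addKn.
exact: deg_sum_succ_gt.
Qed.

Lemma not_star_ramseyP :
  ~ ramsey_prop (@star_rel n) (t - 2) t x <-> a <= 2 * q1 /\ ~ (odd x /\ r1 = 0 /\ odd q1).
Proof.
have xn : x - n = a by lia.
split=> [/not_ramsey_propP [c [c_sym star_free]] | [a_le not_parity]].
  have := star_free_deg_sum (ltnW t_ge3) (_ : 0 < x) c_sym star_free.
  rewrite xn => /(_ ltac:(lia)) /le_double_q_of_deg_sum.
  move=> a_le; split=> // -[x_odd [r1_0 q1_odd]].
  have := double_q_le_of_mod_eq0 r1_0.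
  rewrite -xn => /(star_free_parity t_ge3 c_sym star_free).
  by rewrite x_mod r1_0 addn0 x_odd q1_odd => /(_ erefl).
apply: (not_star_ramsey_of_min_deg (ltnW t_ge3) (q := q1)); last by lia.
case: (boolP (odd x)) => x_odd; last first.
  have xE : x = x.-1.+1 by lia.
  rewrite xE; apply: (min_deg_coloring_sum t_gt0); last by lia.
  by move: x_odd; rewrite {1}xE /= negbK.
case: (posnP r1) => [r1_0 | r1_gt0]; last first.
  have xE : x = (x - 2).+2 by lia.
  rewrite xE; apply: (min_deg_coloring_apex t_gt0); last by lia.
  by move: x_odd; rewrite {1}xE /= negbK.
have q1_even : ~~ odd q1 by apply/negP=> q1_odd; apply: not_parity.
have q1E : q1 = (q1./2).*2 by rewrite -[q1 in LHS]odd_double_half (negbTE q1_even).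
have xE : x = (t * q1./2).*2.+1.
  have : t * q1 = (t * q1./2).*2 by rewrite doubleMr -q1E.
  lia.
by rewrite xE {2}q1E; exact: min_deg_coloring_circ.
Qed.

End StarRamseyNumber.

Unset Implicit Arguments. Set Strict Implicit.

Theorem theorem5 (t n : nat) (q r : int) :
  4 <= t -> 1 <= n ->
  let t' := t./2 in
  let x := (n * t' - 1) %/ (t' - 1) in
  (x%:Z - 2 = t%:Z * q + r)%R -> (0 <= r)%R -> (r <= t%:Z - 1)%R ->
  (is_Rst (@star_rel n) (t - 2) t x.+1 <->
   ((r = t%:Z - 1 /\ 2 * q + 4 < r)%R /\ ~~ odd x) \/
       ((r = t%:Z - 1 /\ 2 * q + 4 < r)%R /\ odd x /\ odd t) \/
       ((r = t%:Z - 1)%R /\ odd x /\ ~~ odd t /\ (q + 1)%R \in dvdz 2) \/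
       ((r < t%:Z - 2 /\ 2 * r + 4 < t%:Z)%R /\ ~~ odd t) \/
       ((r < t%:Z - 2 /\ 2 * q + 2 * r + 5 < t%:Z)%R /\ odd t)).
Proof.
move=> t_ge4 n_gt0 t' x qrE r_ge0 r_le.
have t_half : t = t'.*2 + odd t by rewrite -[t in LHS]odd_double_half addnC.
have t'_ge2 : 2 <= t' by lia.
set a := (n - 1) %/ (t' - 1); set b := (n - 1) %% (t' - 1).
have n1E : n - 1 = a * (t' - 1) + b := divn_eq _ _.
have t'E : (t' - 1).+1 = t' by lia.
have x_na : x = n + a.
  have : n * t' = n * (t' - 1) + n by rewrite -{1}t'E mulnS addnC.
  by rewrite /x => ->; rewrite -addnBA // divnMDl; lia.
have x_div : x.-1 = a * t' + b by rewrite x_na -t'E mulnS; lia.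
have b_lt : b < t'.-1 by rewrite -subn1 ltn_pmod //; lia.
set q1 := x.-1 %/ t; set r1 := x.-1 %% t.
have x_mod : x.-1 = t * q1 + r1 by rewrite mulnC -divn_eq.
have r1_lt : r1 < t by rewrite ltn_pmod //; lia.
have x_gt0 : 0 < x by rewrite x_na addn_gt0 n_gt0.
rewrite is_Rst_succ // (condition_intE t_half t'_ge2 x_div b_lt x_mod r1_lt) //.
rewrite -(not_star_ramseyP t_half t'_ge2 x_div b_lt x_mod r1_lt n_gt0 x_na).
by split=> [[]|] //; split=> //; exact: (star_ramsey_succ t_half t'_ge2 x_div b_lt x_na).
Qed.
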